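(* Let $A$ be a finite group acting by automorphisms on a finite group $G$ such that $\Gamma(G,A)$ contains no triangle. Then for every nonidentity element $x\in G$ there is a prime $p$ such that the order of $x$ divides $p^2$.
   Context: $\Gamma(G,A)$ is the simple graph whose vertices are the $A$-orbits $x^A$ with $x\in G\setminus\{1\}$, two distinct vertices $\mathcal{O},\mathcal{O}'$ being adjacent iff there exist $x\in\mathcal{O}$, $y\in\mathcal{O}'$ with $xy=yx$. A triangle is a set of three distinct pairwise adjacent vertices. *)

From mathcomp Require Import all_boot all_fingroup.
Set Implicit Arguments. Unset Strict Implicit. Unset Printing Implicit Defensive.
Local Open Scope group_scope.

Section Gamma.
Variables (aT gT : finGroupType) (A : {group aT}) (G : {group gT}).
Variable to : groupAction A G.

Definition Gamma_vertices : {set {set gT}} := orbit to A @: G^#.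

Definition Gamma_adj (O O' : {set gT}) : Prop :=
  O != O' /\ exists x y, [/\ x \in O, y \in O' & commute x y].

Definition Gamma_has_triangle : Prop :=
  exists O1 O2 O3,
    [/\ O1 \in Gamma_vertices, O2 \in Gamma_vertices, O3 \in Gamma_vertices,
        Gamma_adj O1 O2 /\ Gamma_adj O1 O3 & Gamma_adj O2 O3].
End Gamma.

From mathcomp Require Import all_boot all_fingroup all_solvable.
Set Implicit Arguments.
Unset Strict Implicit.
Unset Printing Implicit Defensive.
Local Open Scope group_scope.

(* Automorphisms preserve element orders, so the orbits of elements of
   different orders are distinct vertices of Gamma(G,A), and commuting
   elements of different orders span an edge. If n = #[x] does not divide
   p^2 for p = pdiv n, then p < n %/ p < n, and the powers of x of these
   three orders span a triangle. *)

Lemma pdiv_lt_cofactor n :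
  (1 < n)%N -> ~~ (n %| pdiv n ^ 2)%N -> (pdiv n < n %/ pdiv n < n)%N.
Proof.
move=> n_gt1 n_ndvd; set p := pdiv n.
have p_gt1 : (1 < p)%N by rewrite prime_gt1 ?pdiv_prime.
have nE : n = (n %/ p * p)%N by rewrite divnK ?pdiv_dvd.
have q_gt0 : (0 < n %/ p)%N by rewrite divn_gt0 ?pdiv_gt0 // pdiv_leq // ltnW.
have q_gt1 : (1 < n %/ p)%N.
  rewrite ltnNge; apply: contra n_ndvd; rewrite {2}nE.
  by case: (n %/ p) q_gt0 => [|[|]] // _ _; rewrite mul1n dvdn_mull.
rewrite ltn_Pdiv ?(ltnW n_gt1) // andbT ltn_neqAle.
rewrite pdiv_min_dvd ?dvdn_div ?pdiv_dvd // andbT.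
by apply: contra n_ndvd => /eqP pq; rewrite {1}nE -pq.
Qed.

Lemma order_exp_cofactor (gT : finGroupType) (x : gT) d :
  (d %| #[x])%N -> #[x ^+ (#[x] %/ d)] = d.
Proof.
move=> d_dvd; have x_gt0 := order_gt0 x.
rewrite orderXdiv ?dvdn_div // divnA // mulKn //.
Qed.

Section TrianglesInGamma.

Variables (aT gT : finGroupType) (A : {group aT}) (G : {group gT}).
Variable to : groupAction A G.

Lemma order_orbit y z : y \in G -> z \in orbit to A y -> #[z] = #[y].
Proof.
move=> Gy /orbitP [a Aa <-].
by rewrite -(actmE to Aa) order_injm // injm_actm.
Qed.

Lemma orbit_Gamma_vertex y :
  y \in G -> (1 < #[y])%N -> orbit to A y \in Gamma_vertices to.
Proof. by move=> Gy y_gt1; rewrite imset_f // !inE Gy -order_gt1 y_gt1. Qed.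

Lemma orbit_Gamma_adj y z : y \in G -> z \in G ->
  #[y] != #[z] -> commute y z -> Gamma_adj (orbit to A y) (orbit to A z).
Proof.
move=> Gy Gz yz_ord yz_comm; split; last by exists y, z; rewrite !orbit_refl.
apply: contra yz_ord => /eqP eq_orb.
have z_orb_y : z \in orbit to A y by rewrite eq_orb orbit_refl.
by rewrite (order_orbit Gy z_orb_y).
Qed.

Lemma Gamma_triangle_cycle x d1 d2 d3 : x \in G ->
  (d1 %| #[x])%N -> (d2 %| #[x])%N -> (d3 %| #[x])%N ->
  (1 < d1 < d2)%N -> (d2 < d3)%N -> Gamma_has_triangle to.
Proof.
move=> Gx d1_dvd d2_dvd d3_dvd /andP[d1_gt1 lt12] lt23.
pose y d := x ^+ (#[x] %/ d).
have vertex d : (1 < d)%N -> (d %| #[x])%N ->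
    orbit to A (y d) \in Gamma_vertices to.
  by move=> d_gt1 d_dvd; rewrite orbit_Gamma_vertex ?groupX ?order_exp_cofactor.
have edge d d' : (d %| #[x])%N -> (d' %| #[x])%N -> (d < d')%N ->
    Gamma_adj (orbit to A (y d)) (orbit to A (y d')).
  move=> d_dvd d'_dvd lt_dd'; apply: orbit_Gamma_adj; rewrite ?groupX //.
    by rewrite !order_exp_cofactor // ltn_eqF.
  exact: commuteX2.
have d2_gt1 := ltn_trans d1_gt1 lt12.
have d3_gt1 := ltn_trans d2_gt1 lt23.
exists (orbit to A (y d1)), (orbit to A (y d2)), (orbit to A (y d3)).
split; try exact: vertex; last exact: edge.
by split; apply: edge; rewrite // (ltn_trans lt12).
Qed.

End TrianglesInGamma.

Theorem lemma5p1 (aT gT : finGroupType) (A : {group aT}) (G : {group gT})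
    (to : groupAction A G) :
  ~ Gamma_has_triangle to ->
  forall x, x \in G -> x != 1 ->
  exists p : nat, prime p /\ (#[x] %| p ^ 2)%N.
Proof.
move=> no_triangle x Gx x_neq1.
have x_gt1 : (1 < #[x])%N by rewrite order_gt1.
exists (pdiv #[x]); split; first exact: pdiv_prime.
apply/idPn => x_ndvd; apply: no_triangle.
have /andP[lt_p_q lt_q_n] := pdiv_lt_cofactor x_gt1 x_ndvd.
have p_dvd := pdiv_dvd #[x].
apply: (Gamma_triangle_cycle to Gx p_dvd (dvdn_div p_dvd) (dvdnn _)) => //.
by rewrite lt_p_q prime_gt1 ?pdiv_prime.
Qed.
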